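(* Let $p\in\mathbb{N}_0$ and for $j\ge2$ let $\overline{\eta}_j=(-1)^j(2^j-2)\psi^{(j-1)}(1)$. Then, regarding $\binom{2m}{m}=\frac{\Gamma(2m+1)}{\Gamma(m+1)^2}$ as an analytic function of $m$ near $0$, $$\frac{d^p}{dm^p}\binom{2m}{m}\bigg|_{m=0}=(-1)^p B_p(0,\overline{\eta}_2,\overline{\eta}_3,\dots,\overline{\eta}_p)$$ and $$\frac{d^p}{dm^p}\bigg(\frac{1}{4^m}\binom{2m}{m}\bigg)\bigg|_{m=0}=(-1)^p\sum_{i=0}^{p}\binom{p}{i}(\log 4)^{p-i}B_i(0,\overline{\eta}_2,\dots,\overline{\eta}_i).$$
   Context: $\psi^{(n)}(z)=\frac{d^{n+1}}{dz^{n+1}}\log\Gamma(z)$ is the polygamma function. $B_n(s_1,\dots,s_n)$ denotes the complete Bell polynomial, defined by $\exp\big(\sum_{j\ge1}s_j t^j/j!\big)=\sum_{n\ge0}B_n(s_1,\dots,s_n)t^n/n!$; $B_0=1$. *)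

From Stdlib Require Import Reals.
From Coquelicot Require Import Coquelicot.
Open Scope R_scope.

Definition Gamma (x : R) : R :=
  RInt_gen (fun t => Rpower t (x - 1) * exp (- t)) (at_right 0) (Rbar_locally p_infty).

Definition polygamma (n : nat) (z : R) : R :=
  Derive_n (fun y => ln (Gamma y)) (S n) z.

(* Complete Bell polynomial B_n(s_1,...,s_n): n! [t^n] exp(sum_j s_j t^j / j!),
   i.e. the n-th derivative at t = 0 of exp(sum_{j=1}^n s_j t^j / j!)
   (terms with j > n do not affect this coefficient). s 0 is unused. *)
Definition Bell (n : nat) (s : nat -> R) : R :=
  Derive_n (fun t => exp (sum_n_m (fun j => s j * t ^ j / INR (Factorial.fact j)) 1 n)) n 0.

Definition etabar (j : nat) : R :=
  (-1) ^ j * (2 ^ j - 2) * polygamma (j - 1) 1.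

(* argument sequence (0, etabar_2, etabar_3, ...) indexed from 1 *)
Definition bell_args (j : nat) : R := if (j <=? 1)%nat then 0 else etabar j.

Definition central_binom (m : R) : R := Gamma (2 * m + 1) / (Gamma (m + 1)) ^ 2.

From Stdlib Require Import Reals Lra Lia.
From Coquelicot Require Import Coquelicot.
Open Scope R_scope.

(* Near m = 0 we have binom(2m, m) = exp h(m) with h(m) = ln Gamma(2m+1) - 2 ln Gamma(m+1),
   so h(0) = 0 and h^(j)(0) = (2^j - 2) psi^(j-1)(1) = (-1)^j etabar_j (zero for j = 1).
   The p-th derivative at 0 of exp h only depends on h'(0), ..., h^(p)(0), hence equals that
   of the exponential of the Taylor polynomial of h, which is B_p(h'(0), ..., h^(p)(0)) by
   definition; homogeneity of B_p (weight j on the j-th argument) with factor -1 gives the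
   first formula, and the Leibniz rule applied to exp h(m) * exp(-m ln 4) the second.
   The analytic input is that Gamma is smooth near 1, with derivatives
   int_0^oo (ln t)^k t^(x-1) e^(-t) dt: differentiation under the integral sign is justified
   by a second-order Taylor bound in x of the integrand that is integrable in t. *)

(** * Higher derivatives on an open set *)

Definition is_derive_seq (D : R -> Prop) (n : nat) (F : nat -> R -> R) : Prop :=
  forall k x, (k < n)%nat -> D x -> is_derive (F k) x (F (S k) x).

Definition ex_derive_upto (D : R -> Prop) (n : nat) (f : R -> R) : Prop :=
  is_derive_seq D n (Derive_n f).

Definition smooth_on (D : R -> Prop) (f : R -> R) : Prop :=
  forall n, ex_derive_upto D n f.

Lemma is_derive_eq (f : R -> R) x l l' : is_derive f x l -> l = l' -> is_derive f x l'.
Proof. now intros Hf <-. Qed.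

Lemma Derive_n_S f n x : Derive_n f (S n) x = Derive_n (Derive f) n x.
Proof. rewrite <- Nat.add_1_r, <- (Derive_n_comp f n 1). reflexivity. Qed.

Lemma Derive_exp_comp r x :
  ex_derive r x -> Derive (fun y => exp (r y)) x = Derive r x * exp (r x).
Proof.
  intros [l Hr]. apply is_derive_unique. rewrite (is_derive_unique _ _ _ Hr).
  apply (is_derive_comp exp r); [apply is_derive_exp | exact Hr].
Qed.

Lemma sum_pascal (a : nat -> R) k :
  sum_f_R0 (fun i => Binomial.C k i * (a (S i) + a i)) k =
  sum_f_R0 (fun i => Binomial.C (S k) i * a i) (S k).
Proof.
  destruct k as [|k]; [simpl; unfold Binomial.C; simpl; field|].
  rewrite (sum_eq _ (fun i => Binomial.C (S k) i * a (S i) + Binomial.C (S k) i * a i))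
    by (intros; ring).
  rewrite plus_sum, (decomp_sum _ (S (S k))), tech5 by lia. simpl pred.
  rewrite (decomp_sum (fun i => Binomial.C (S k) i * a i)), tech5 by lia. simpl pred.
  rewrite (sum_eq (fun i => Binomial.C (S (S k)) (S i) * a (S i))
            (fun i => Binomial.C (S k) i * a (S i) + Binomial.C (S k) (S i) * a (S i)))
    by (intros i Hi; rewrite <- pascal by lia; ring).
  rewrite plus_sum, !C_n_0, !C_n_n. ring.
Qed.

Definition leibniz (F G : nat -> R -> R) (n : nat) (x : R) : R :=
  sum_n (fun i => Binomial.C n i * F i x * G (n - i)%nat x) n.

Lemma leibniz_0 F G x : leibniz F G 0 x = F O x * G O x.
Proof. unfold leibniz. rewrite sum_O, C_n_0. simpl. ring. Qed.

Section DerivativesOnOpenSet.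

Variable D : R -> Prop.
Hypothesis D_open : open D.

Lemma is_derive_seq_lincomb n F G a b :
  is_derive_seq D n F -> is_derive_seq D n G ->
  is_derive_seq D n (fun k x => a * F k x + b * G k x).
Proof.
  intros HF HG k x Hk Hx.
  apply (is_derive_plus (fun y => a * F k y) (fun y => b * G k y)); apply is_derive_scal; auto.
Qed.

Lemma is_derive_seq_comp_affine (E : R -> Prop) n F a b :
  is_derive_seq E n F -> (forall x, D x -> E (a * x + b)) ->
  is_derive_seq D n (fun k x => a ^ k * F k (a * x + b)).
Proof.
  intros HF HDE k x Hk Hx.
  assert (Haff : is_derive (fun y => a * y + b) x a) by (auto_derive; [exact I | ring]).
  eapply is_derive_eq.
  - apply is_derive_scal, (is_derive_comp (F k) _ _ _ _ (HF k _ Hk (HDE x Hx)) Haff).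
  - simpl; unfold scal; simpl; unfold mult; simpl; ring.
Qed.

Lemma is_derive_seq_leibniz n F G :
  is_derive_seq D n F -> is_derive_seq D n G -> is_derive_seq D n (leibniz F G).
Proof.
  intros HF HG k x Hk Hx. unfold leibniz.
  set (a := fun i => F i x * G (S k - i)%nat x).
  replace (sum_n _ (S k)) with (sum_n (fun i => Binomial.C k i * (a (S i) + a i)) k)
    by (rewrite !sum_n_Reals, sum_pascal; apply sum_eq; intros i _; unfold a; ring).
  apply (is_derive_sum_n (fun i y => Binomial.C k i * F i y * G (k - i)%nat y)).
  intros i Hi. unfold a.
  replace (S k - S i)%nat with (k - i)%nat by lia.
  replace (S k - i)%nat with (S (k - i)) by lia.
  eapply is_derive_eq.
  - apply (is_derive_mult (fun y => Binomial.C k i * F i y) (G (k - i)%nat)).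
    + apply is_derive_scal, HF; [lia | exact Hx].
    + apply HG; [lia | exact Hx].
    + intros; apply Rmult_comm.
  - simpl; unfold plus, scal, mult; simpl; unfold mult; simpl; ring.
Qed.

Lemma is_derive_seq_Derive_n n F f :
  is_derive_seq D n F -> (forall x, D x -> f x = F O x) ->
  forall k x, (k <= n)%nat -> D x -> Derive_n f k x = F k x.
Proof.
  intros HF Hf k; induction k as [|k IH]; intros x Hk Hx; [now apply Hf|].
  change (Derive (Derive_n f k) x = F (S k) x).
  rewrite (Derive_ext_loc _ (F k)).
  - apply is_derive_unique, HF; [lia | exact Hx].
  - apply (locally_open D); [exact D_open | | exact Hx].
    intros y Hy; apply IH; [lia | exact Hy].
Qed.

Lemma ex_derive_upto_is_derive_seq n F f :
  is_derive_seq D n F -> (forall x, D x -> f x = F O x) -> ex_derive_upto D n f.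
Proof.
  intros HF Hf k x Hk Hx.
  rewrite (is_derive_seq_Derive_n n F f HF Hf (S k) x Hk Hx).
  apply (is_derive_ext_loc (F k)); [|now apply HF].
  apply (locally_open D); [exact D_open | | exact Hx].
  intros y Hy; symmetry.
  apply (is_derive_seq_Derive_n n F f); [exact HF | exact Hf | lia | exact Hy].
Qed.

Lemma ex_derive_upto_ext n f g :
  (forall x, D x -> f x = g x) -> ex_derive_upto D n g -> ex_derive_upto D n f.
Proof. intros Hfg Hg. exact (ex_derive_upto_is_derive_seq n (Derive_n g) f Hg Hfg). Qed.

Lemma Derive_n_ext_on f g k x :
  (forall y, D y -> f y = g y) -> D x -> Derive_n f k x = Derive_n g k x.
Proof. intros Hfg Hx. apply Derive_n_ext_loc, (locally_open D); assumption. Qed.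

Lemma ex_derive_upto_scal n c f :
  ex_derive_upto D n f -> ex_derive_upto D n (fun x => c * f x).
Proof.
  intros Hf.
  apply (ex_derive_upto_is_derive_seq n (fun k x => c * Derive_n f k x + 0 * Derive_n f k x)).
  - now apply is_derive_seq_lincomb.
  - intros x _; simpl; ring.
Qed.

Lemma ex_derive_upto_mult n f g :
  ex_derive_upto D n f -> ex_derive_upto D n g -> ex_derive_upto D n (fun x => f x * g x).
Proof.
  intros Hf Hg. apply (ex_derive_upto_is_derive_seq n (leibniz (Derive_n f) (Derive_n g))).
  - now apply is_derive_seq_leibniz.
  - intros x _. now rewrite leibniz_0.
Qed.

Lemma Derive_n_mult_on n f g x :
  ex_derive_upto D n f -> ex_derive_upto D n g -> D x ->
  Derive_n (fun y => f y * g y) n x = leibniz (Derive_n f) (Derive_n g) n x.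
Proof.
  intros Hf Hg Hx.
  apply (is_derive_seq_Derive_n n); [now apply is_derive_seq_leibniz | | lia | exact Hx].
  intros y _. now rewrite leibniz_0.
Qed.

Lemma smooth_on_ex_derive f x : smooth_on D f -> D x -> ex_derive f x.
Proof. intros Hf Hx. eexists. exact (Hf 1%nat O x ltac:(lia) Hx). Qed.

Lemma smooth_on_Derive f : smooth_on D f -> smooth_on D (Derive f).
Proof.
  intros Hf n k x Hk Hx. apply (is_derive_ext (Derive_n f (S k))).
  - intros; apply Derive_n_S.
  - rewrite <- Derive_n_S. apply (Hf (S n)); [lia | exact Hx].
Qed.

Lemma smooth_on_of_Derive u :
  (forall x, D x -> ex_derive u x) ->
  (forall n, ex_derive_upto D n u -> ex_derive_upto D n (Derive u)) ->
  smooth_on D u.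
Proof.
  intros Hu Hstep n; induction n as [|n IH]; intros [|k] x Hk Hx; try lia.
  - apply Derive_correct, Hu, Hx.
  - apply (is_derive_ext (Derive_n (Derive u) k)).
    + intros; symmetry; apply Derive_n_S.
    + rewrite Derive_n_S. apply (Hstep n IH); [lia | exact Hx].
Qed.

Lemma smooth_on_exp g : smooth_on D g -> smooth_on D (fun x => exp (g x)).
Proof.
  intros Hg. apply smooth_on_of_Derive.
  - intros x Hx. apply ex_derive_comp; [apply ex_derive_Reals_1, derivable_pt_exp |].
    now apply smooth_on_ex_derive.
  - intros n Hn. apply (ex_derive_upto_ext n _ (fun y => Derive g y * exp (g y))).
    + intros x Hx. now apply Derive_exp_comp, smooth_on_ex_derive.
    + apply ex_derive_upto_mult; [apply smooth_on_Derive, Hg | exact Hn].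
Qed.

Lemma smooth_on_inv h :
  smooth_on D h -> (forall x, D x -> h x <> 0) -> smooth_on D (fun x => / h x).
Proof.
  intros Hh Hnz.
  assert (Hh' : forall x, D x -> is_derive h x (Derive h x))
    by (intros x Hx; now apply Derive_correct, smooth_on_ex_derive).
  apply smooth_on_of_Derive.
  - intros x Hx. eexists. apply is_derive_inv; [now apply Hh' | now apply Hnz].
  - intros n Hn. apply (ex_derive_upto_ext n _ (fun y => -1 * Derive h y * (/ h y * / h y))).
    + intros x Hx. apply is_derive_unique. eapply is_derive_eq.
      * apply is_derive_inv; [now apply Hh' | now apply Hnz].
      * simpl. field. now apply Hnz.
    + apply ex_derive_upto_mult; [| now apply ex_derive_upto_mult].
      apply ex_derive_upto_scal, smooth_on_Derive, Hh.
Qed.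

Lemma smooth_on_ln h :
  smooth_on D h -> (forall x, D x -> 0 < h x) -> smooth_on D (fun x => ln (h x)).
Proof.
  intros Hh Hpos.
  assert (Hh' : forall x, D x -> is_derive h x (Derive h x))
    by (intros x Hx; now apply Derive_correct, smooth_on_ex_derive).
  assert (Hln : forall x, D x -> is_derive (fun y => ln (h y)) x (Derive h x * / h x)).
  { intros x Hx. eapply is_derive_eq.
    - apply (is_derive_comp ln h); [apply is_derive_ln, Hpos, Hx | now apply Hh'].
    - simpl; unfold scal; simpl; unfold mult; simpl; ring. }
  apply smooth_on_of_Derive.
  - intros x Hx. eexists. now apply Hln.
  - intros n Hn. apply (ex_derive_upto_ext n _ (fun y => Derive h y * / h y)).
    + intros x Hx. now apply is_derive_unique, Hln.
    + apply ex_derive_upto_mult; [apply smooth_on_Derive, Hh |].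
      apply smooth_on_inv; [exact Hh |]. intros x Hx; apply Rgt_not_eq, Hpos, Hx.
Qed.

End DerivativesOnOpenSet.

(** * Bell polynomials as derivatives of exponentials *)

Definition bell_exponent (s : nat -> R) (n : nat) (t : R) : R :=
  sum_n_m (fun j => s j * t ^ j / INR (Factorial.fact j)) 1 n.

Lemma Bell_exp_bell_exponent n s :
  Bell n s = Derive_n (fun t => exp (bell_exponent s n t)) n 0.
Proof. reflexivity. Qed.

Lemma ex_derive_n_monomial c j k x :
  ex_derive_n (fun t => c * t ^ j / INR (Factorial.fact j)) k x.
Proof.
  apply (ex_derive_n_ext (fun t => c / INR (Factorial.fact j) * t ^ j)).
  - intros t; field; apply INR_fact_neq_0.
  - apply ex_derive_n_scal_l, ex_derive_n_pow.
Qed.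

Lemma Derive_n_monomial_0 c i j :
  Derive_n (fun t => c * t ^ j / INR (Factorial.fact j)) i 0 = if Nat.eq_dec i j then c else 0.
Proof.
  rewrite (Derive_n_ext _ (fun t => c / INR (Factorial.fact j) * t ^ j))
    by (intros t; field; apply INR_fact_neq_0).
  rewrite Derive_n_scal_l, Derive_n_pow.
  destruct (Compare_dec.le_dec i j), (Nat.eq_dec i j) as [<-|]; try lia.
  - rewrite Nat.sub_diag. simpl. field. apply INR_fact_neq_0.
  - rewrite pow_i by lia. ring.
  - ring.
Qed.

Lemma sum_n_m_single (f : nat -> R) m n i :
  (m <= i <= n)%nat -> (forall j, (m <= j <= n)%nat -> j <> i -> f j = 0) ->
  sum_n_m f m n = f i.
Proof.
  intros Hi Hf.
  assert (Hzero : forall a b, (m <= a)%nat -> (b <= n)%nat -> (b < i \/ i < a)%nat ->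
            sum_n_m f a b = 0).
  { intros a b Ha Hb Hab. rewrite (sum_n_m_ext_loc _ (fun _ => zero)).
    - now rewrite sum_n_m_const_zero.
    - intros j Hj. apply Hf; lia. }
  rewrite (sum_n_m_Chasles f m i n), (Hzero (S i) n) by lia.
  destruct (Nat.eq_dec m i) as [<-|Hmi].
  - rewrite sum_n_n. unfold plus; simpl; ring.
  - destruct i as [|i]; [lia|].
    rewrite sum_n_Sm, Hzero by lia. unfold plus; simpl; ring.
Qed.

Lemma smooth_on_bell_exponent D s n : smooth_on D (bell_exponent s n).
Proof.
  intros m k x _ _. apply (Derive_correct (Derive_n _ k)).
  apply (ex_derive_n_sum_n_m 1 n _ (S k)), filter_forall.
  intros t l j _ _. apply ex_derive_n_monomial.
Qed.

Lemma bell_exponent_0 s n : bell_exponent s n 0 = 0.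
Proof.
  unfold bell_exponent. rewrite (sum_n_m_ext_loc _ (fun _ => zero)).
  - now rewrite sum_n_m_const_zero.
  - intros j Hj. rewrite pow_i by lia. unfold zero; simpl; field. apply INR_fact_neq_0.
Qed.

Lemma Derive_n_bell_exponent_0 s n i :
  (1 <= i <= n)%nat -> Derive_n (bell_exponent s n) i 0 = s i.
Proof.
  intros Hi. unfold bell_exponent.
  rewrite Derive_n_sum_n_m.
  - rewrite (sum_n_m_single _ 1 n i Hi), Derive_n_monomial_0.
    + now destruct (Nat.eq_dec i i).
    + intros j _ Hji. rewrite Derive_n_monomial_0. destruct (Nat.eq_dec i j); [lia | reflexivity].
  - apply filter_forall. intros t l j _ _. apply ex_derive_n_monomial.
Qed.

Lemma Bell_homogeneous n s s' a :
  (forall j, s' j = a ^ j * s j) -> Bell n s' = a ^ n * Bell n s.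
Proof.
  intros Hs. rewrite !Bell_exp_bell_exponent.
  set (E := fun t => exp (bell_exponent s n t)).
  assert (HE : smooth_on (fun _ => True) E)
    by (apply smooth_on_exp; [apply open_true | apply smooth_on_bell_exponent]).
  assert (HEa := is_derive_seq_comp_affine (fun _ => True) (fun _ => True) n (Derive_n E) a 0
                  (HE n) (fun _ _ => I)).
  rewrite (Derive_n_ext _ (fun t => E (a * t + 0))).
  - rewrite (is_derive_seq_Derive_n _ open_true n _ _ HEa);
      [| intros t _; simpl; ring | lia | exact I].
    now rewrite Rmult_0_r, Rplus_0_l.
  - intros t. unfold E, bell_exponent. f_equal.
    apply sum_n_m_ext; intros j. rewrite Hs, Rplus_0_r, Rpow_mult_distr. simpl. field.
    apply INR_fact_neq_0.
Qed.

Lemma Derive_n_exp_flat D r p :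
  open D -> D 0 -> smooth_on D r ->
  (forall i, (1 <= i <= p)%nat -> Derive_n r i 0 = 0) ->
  forall k, (1 <= k <= p)%nat -> Derive_n (fun t => exp (r t)) k 0 = 0.
Proof.
  intros HD HD0 Hr Hflat [|k] Hk; [lia|].
  rewrite Derive_n_S, (Derive_n_ext_on D HD _ (fun y => Derive r y * exp (r y))); [| | exact HD0].
  - rewrite (Derive_n_mult_on D HD k);
      [| apply smooth_on_Derive, Hr | apply smooth_on_exp, Hr; exact HD | exact HD0].
    unfold leibniz. rewrite (sum_n_ext_loc _ (fun _ => zero)).
    + unfold sum_n. now rewrite sum_n_m_const_zero.
    + intros i Hi. rewrite <- Derive_n_S, Hflat by lia. unfold zero; simpl; ring.
  - intros x Hx. now apply Derive_exp_comp, (smooth_on_ex_derive D).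
Qed.

Lemma Derive_n_exp_Bell D h p :
  open D -> D 0 -> smooth_on D h ->
  Derive_n (fun t => exp (h t)) p 0 = exp (h 0) * Bell p (fun j => Derive_n h j 0).
Proof.
  intros HD HD0 Hh.
  set (c := fun j => Derive_n h j 0).
  set (T := bell_exponent c p).
  assert (HT : smooth_on D T) by apply smooth_on_bell_exponent.
  set (r := fun t => h t + -1 * T t).
  set (Dr := fun k x => 1 * Derive_n h k x + -1 * Derive_n T k x).
  assert (HDr : forall n, is_derive_seq D n Dr)
    by (intros n; exact (is_derive_seq_lincomb D n _ _ 1 (-1) (Hh n) (HT n))).
  assert (Hr_eq : forall x, D x -> r x = Dr O x) by (intros x _; unfold r, Dr; simpl; ring).
  assert (Hr : smooth_on D r) by (intros n; apply (ex_derive_upto_is_derive_seq D HD n Dr); auto).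
  assert (Hflat : forall i, (1 <= i <= p)%nat -> Derive_n r i 0 = 0).
  { intros i Hi. rewrite (is_derive_seq_Derive_n D HD i Dr r (HDr i) Hr_eq i 0) by auto.
    unfold Dr, T. rewrite Derive_n_bell_exponent_0 by exact Hi. unfold c; ring. }
  (* [exp h = exp T * exp r] with [r] flat to order [p] at 0, so in the Leibniz formula
     only the term carrying the [p]-th derivative of [exp T] survives. *)
  assert (Hsplit : forall t, exp (h t) = exp (T t) * exp (r t))
    by (intros t; rewrite <- exp_plus; f_equal; unfold r; ring).
  rewrite (Derive_n_ext _ _ p 0 Hsplit), (Derive_n_mult_on D HD p);
    [| now apply smooth_on_exp | now apply smooth_on_exp | exact HD0].
  unfold leibniz, sum_n. rewrite (sum_n_m_single _ O p p); [| lia |].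
  - rewrite Nat.sub_diag, C_n_n. simpl. unfold r, T.
    rewrite bell_exponent_0, Bell_exp_bell_exponent.
    replace (h 0 + -1 * 0) with (h 0) by ring. ring.
  - intros i Hi Hip. rewrite (Derive_n_exp_flat D r p HD HD0 Hr Hflat (p - i)) by lia. ring.
Qed.

(** * Improper integrals *)

Lemma ex_derive_continuous_R (f : R -> R) x : ex_derive f x -> continuous f x.
Proof. apply (ex_derive_continuous (K := R_AbsRing) (V := R_NormedModule)). Qed.

Lemma ex_RInt_gen_Cauchy (Fa : (R -> Prop) -> Prop) {FF : ProperFilter Fa}
    (f P : R -> R) (b L : R) (Q : R -> Prop) :
  Fa Q -> (forall a, Q a -> ex_RInt f a b) ->
  (forall a a', Q a -> Q a' -> Rabs (RInt f a a') <= Rabs (P a - P a')) ->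
  filterlim P Fa (locally L) ->
  ex_RInt_gen f Fa (at_point b).
Proof.
  intros HQ Hex Hbound HP.
  set (Fm := filtermap (fun a => RInt f a b) Fa).
  assert (Fm_proper : ProperFilter Fm) by (apply filtermap_proper_filter; auto).
  assert (Fm_cauchy : cauchy Fm).
  { apply cauchy_distance. intros eps.
    assert (Heps2 : 0 < eps / 2) by (destruct eps; simpl; lra).
    pose proof (proj1 (filterlim_locally P L) HP (mkposreal _ Heps2)) as HL.
    exists (fun z => exists a, Q a /\ ball L (eps / 2) (P a) /\ z = RInt f a b). split.
    - unfold Fm, filtermap. apply (filter_imp (fun a => Q a /\ ball L (eps / 2) (P a))).
      + intros a [Qa La]. exists a. auto.
      + apply filter_and; [exact HQ | exact HL].
    - intros u v [a [Qa [La ->]]] [a' [Qa' [La' ->]]].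
      change (Rabs (RInt f a' b - RInt f a b) < eps).
      change (Rabs (P a - L) < eps / 2) in La. change (Rabs (P a' - L) < eps / 2) in La'.
      assert (Ha'a : ex_RInt f a' a)
        by (apply (ex_RInt_Chasles _ _ b); [apply Hex | apply ex_RInt_swap, Hex]; assumption).
      rewrite <- (RInt_Chasles f a' a b Ha'a (Hex a Qa)).
      change (plus ?x ?y) with (x + y). rewrite Rplus_minus_r.
      eapply Rle_lt_trans; [now apply Hbound|].
      replace (P a' - P a) with ((P a' - L) - (P a - L)) by ring.
      eapply Rle_lt_trans; [apply Rabs_triang|]. rewrite Rabs_Ropp. lra. }
  exists (lim Fm). intros P' [eps Heps].
  apply (Filter_prod _ _ _ (fun a => Q a /\ ball (lim Fm) eps (RInt f a b)) (fun y => y = b)).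
  - apply filter_and; [exact HQ | exact (complete_cauchy Fm Fm_proper Fm_cauchy eps)].
  - reflexivity.
  - intros a y [Qa Ba] ->. exists (RInt f a b). split.
    + exact (RInt_correct f a b (Hex a Qa)).
    + now apply Heps.
Qed.

Lemma abs_RInt_le_primitive (f d P : R -> R) u v :
  (forall t, Rmin u v <= t <= Rmax u v ->
     continuous f t /\ continuous d t /\ Rabs (f t) <= d t /\ is_derive P t (d t)) ->
  Rabs (RInt f u v) <= Rabs (P u - P v).
Proof.
  assert (Hle : forall u v, u <= v ->
    (forall t, u <= t <= v ->
       continuous f t /\ continuous d t /\ Rabs (f t) <= d t /\ is_derive P t (d t)) ->
    Rabs (RInt f u v) <= Rabs (P u - P v)).
  { clear u v. intros u v Huv H.
    assert (Hf : ex_RInt f u v)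
      by (apply (ex_RInt_continuous (V := R_CompleteNormedModule));
          rewrite Rmin_left, Rmax_right by lra; apply H).
    assert (Hd : ex_RInt d u v)
      by (apply (ex_RInt_continuous (V := R_CompleteNormedModule));
          rewrite Rmin_left, Rmax_right by lra; apply H).
    apply (Rle_trans _ (RInt d u v)).
    - apply (Rle_trans _ _ _ (abs_RInt_le f u v Huv Hf)).
      apply RInt_le; [exact Huv | now apply ex_RInt_norm | exact Hd |].
      intros t Ht. apply H; lra.
    - rewrite (is_RInt_unique d u v (P v - P u)), Rabs_minus_sym; [apply Rle_abs|].
      apply (is_RInt_derive P d); rewrite Rmin_left, Rmax_right by lra; apply H. }
  intros H. destruct (Rle_dec u v) as [Huv | Hvu].
  - apply Hle; [exact Huv|]. rewrite Rmin_left, Rmax_right in H by lra. exact H.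
  - rewrite <- opp_RInt_swap.
    + change (Rabs (- RInt f v u) <= Rabs (P u - P v)).
      rewrite Rabs_Ropp, Rabs_minus_sym. apply Hle; [lra|].
      rewrite Rmin_right, Rmax_left in H by lra. exact H.
    + apply (ex_RInt_continuous (V := R_CompleteNormedModule)).
      intros t Ht. apply H. now rewrite Rmin_comm, Rmax_comm.
Qed.

Lemma filterlim_scal_exp_m_infty {T} (F : (T -> Prop) -> Prop) {FF : Filter F} (u : T -> R) K :
  filterlim u F (Rbar_locally m_infty) -> filterlim (fun t => K * exp (u t)) F (locally 0).
Proof.
  intros Hu. apply (filterlim_comp _ _ _ (fun t => exp (u t)) (Rmult K) _ (locally 0) _).
  - exact (filterlim_comp _ _ _ u exp _ _ _ Hu is_lim_exp_m).
  - pose proof (filterlim_Rbar_mult_l K (Finite 0)) as HK. simpl in HK.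
    now rewrite Rmult_0_r in HK.
Qed.

Lemma filterlim_scal_ln_at_right_0 beta :
  0 < beta -> filterlim (fun t => beta * ln t) (at_right 0) (Rbar_locally m_infty).
Proof.
  intros Hbeta. apply (filterlim_comp _ _ _ ln (Rmult beta) _ (Rbar_locally m_infty) _ is_lim_ln_0).
  intros P [M HM]. exists (M / beta). intros x Hx. apply HM.
  apply (Rmult_lt_reg_l (/ beta)); [now apply Rinv_0_lt_compat|].
  rewrite <- Rmult_assoc, Rinv_l, Rmult_1_l by lra. unfold Rdiv in Hx. lra.
Qed.

Lemma filterlim_scal_p_infty_m_infty a :
  a < 0 -> filterlim (fun t => a * t) (Rbar_locally p_infty) (Rbar_locally m_infty).
Proof.
  intros Ha P [M HM]. exists (M / a). intros x Hx. apply HM.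
  apply (Rmult_lt_reg_l (- / a)); [apply Ropp_0_gt_lt_contravar, Rinv_lt_0_compat, Ha|].
  replace (- / a * (a * x)) with (- x) by (field; lra).
  replace (- / a * M) with (- (M / a)) by (unfold Rdiv; ring). lra.
Qed.

Lemma at_right_0_le_1 : at_right 0 (fun a => 0 < a <= 1).
Proof.
  exists (mkposreal 1 Rlt_0_1). intros y Hy Hpos. change (Rabs (y - 0) < 1) in Hy.
  apply Rabs_def2 in Hy. lra.
Qed.

Lemma ex_RInt_continuous_pos (f : R -> R) a b :
  (forall t, 0 < t -> continuous f t) -> 0 < a -> 0 < b -> ex_RInt f a b.
Proof.
  intros Hf Ha Hb. apply (ex_RInt_continuous (V := R_CompleteNormedModule)).
  intros t Ht. apply Hf. assert (0 < Rmin a b) by now apply Rmin_glb_lt. lra.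
Qed.

Lemma ex_RInt_gen_at_right_0 (f : R -> R) M beta :
  0 < beta -> (forall t, 0 < t -> continuous f t) ->
  (forall t, 0 < t <= 1 -> Rabs (f t) <= M * exp ((beta - 1) * ln t)) ->
  ex_RInt_gen f (at_right 0) (at_point 1).
Proof.
  intros Hbeta Hf Hbound.
  apply (ex_RInt_gen_Cauchy _ f (fun t => M / beta * exp (beta * ln t)) 1 0 (fun a => 0 < a <= 1)).
  - exact at_right_0_le_1.
  - intros a Ha. apply ex_RInt_continuous_pos; [exact Hf | lra | lra].
  - intros a a' Ha Ha'. apply (abs_RInt_le_primitive f (fun t => M * exp ((beta - 1) * ln t))
                                 (fun t => M / beta * exp (beta * ln t))).
    intros t Ht.
    assert (0 < t <= 1).
    { split; [apply (Rlt_le_trans _ (Rmin a a')); [now apply Rmin_glb_lt | lra] |].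
      apply (Rle_trans _ (Rmax a a')); [lra | now apply Rmax_lub]. }
    split; [|split; [|split]]; [apply Hf; lra | | apply Hbound; lra |].
    + apply ex_derive_continuous_R. auto_derive. lra.
    + auto_derive; [lra|].
      replace ((beta - 1) * ln t) with (beta * ln t + - ln t) by ring.
      rewrite exp_plus, exp_Ropp, exp_ln by lra. field; lra.
  - apply (filterlim_scal_exp_m_infty (at_right 0)), filterlim_scal_ln_at_right_0, Hbeta.
Qed.

Lemma ex_RInt_gen_p_infty (f : R -> R) M :
  (forall t, 0 < t -> continuous f t) ->
  (forall t, 1 <= t -> Rabs (f t) <= M * exp (-1/2 * t)) ->
  ex_RInt_gen f (at_point 1) (Rbar_locally p_infty).
Proof.
  intros Hf Hbound.
  destruct (ex_RInt_gen_Cauchy (Rbar_locally p_infty) f (fun t => -2 * M * exp (-1/2 * t))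
              1 0 (fun a => 1 <= a)) as [l Hl].
  - exists 1. intros; lra.
  - intros a Ha. apply ex_RInt_continuous_pos; [exact Hf | lra | lra].
  - intros a a' Ha Ha'. apply (abs_RInt_le_primitive f (fun t => M * exp (-1/2 * t))
                                 (fun t => -2 * M * exp (-1/2 * t))).
    intros t Ht.
    assert (1 <= t) by (apply (Rle_trans _ (Rmin a a')); [now apply Rmin_glb | lra]).
    split; [|split; [|split]]; [apply Hf; lra | | apply Hbound; lra |].
    + apply ex_derive_continuous_R. auto_derive. exact I.
    + auto_derive; [exact I | field].
  - apply (filterlim_scal_exp_m_infty (Rbar_locally p_infty)), filterlim_scal_p_infty_m_infty.
    lra.
  - exists (opp l). now apply is_RInt_gen_swap.
Qed.

(** * Derivatives of the Gamma function near 1 *)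

Definition Gamma_integrand (k : nat) (x t : R) : R :=
  ln t ^ k * exp ((x - 1) * ln t) * exp (- t).

Definition Gamma_deriv (k : nat) (x : R) : R :=
  RInt_gen (Gamma_integrand k x) (at_right 0) (Rbar_locally p_infty).

Lemma exp_le x y : x <= y -> exp x <= exp y.
Proof. intros [Hlt | ->]; [now apply Rlt_le, exp_increasing | apply Rle_refl]. Qed.

Lemma pow_le_fact_exp z k : 0 <= z -> z ^ k <= INR (Factorial.fact k) * exp z.
Proof.
  intros Hz. assert (Hfact : 0 < INR (Factorial.fact k)) by apply INR_fact_lt_0.
  assert (Hterm : z ^ k / INR (Factorial.fact k) <= exp z).
  { apply (Rle_trans _ (sum_f_R0 (fun i => z ^ i / INR (Factorial.fact i)) k));
      [| exact (exp_ge_taylor z k Hz)].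
    destruct k as [|k]; [simpl; lra|].
    rewrite tech5. enough (0 <= sum_f_R0 (fun i => z ^ i / INR (Factorial.fact i)) k) by lra.
    apply cond_pos_sum. intros i.
    apply Rmult_le_pos; [now apply pow_le | left; apply Rinv_0_lt_compat, INR_fact_lt_0]. }
  apply (Rmult_le_reg_r (/ INR (Factorial.fact k))); [now apply Rinv_0_lt_compat|].
  replace (INR (Factorial.fact k) * exp z * / INR (Factorial.fact k)) with (exp z) by (field; lra).
  exact Hterm.
Qed.

Lemma Gamma_integrand_bound_0 k x t :
  1/4 <= x <= 7/4 -> 0 < t <= 1 ->
  Rabs (Gamma_integrand k x t) <= 8 ^ k * INR (Factorial.fact k) * exp ((1/8 - 1) * ln t).
Proof.
  intros Hx Ht. unfold Gamma_integrand. set (l := ln t).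
  assert (Hl : l <= 0) by (unfold l; rewrite <- ln_1; apply ln_le; lra).
  rewrite !Rabs_mult, <- RPow_abs, (Rabs_left1 l), !Rabs_pos_eq by (lra || apply Rlt_le, exp_pos).
  assert (Hexp_t : exp (- t) <= 1) by (rewrite <- exp_0; apply exp_le; lra).
  assert (Hexp_x : exp ((x - 1) * l) <= exp ((1/4 - 1) * l)) by (apply exp_le; nra).
  assert (Hpow : (- l) ^ k <= 8 ^ k * INR (Factorial.fact k) * exp (- l / 8)).
  { replace (- l) with (8 * (- l / 8)) at 1 by field.
    rewrite Rpow_mult_distr, Rmult_assoc. apply Rmult_le_compat_l; [apply pow_le; lra|].
    apply pow_le_fact_exp. lra. }
  replace ((1/8 - 1) * l) with (- l / 8 + (1/4 - 1) * l) by field. rewrite exp_plus.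
  pose proof (pow_le (- l) k ltac:(lra)). pose proof (exp_pos (- t)).
  pose proof (exp_pos ((x - 1) * l)). pose proof (exp_pos (- l / 8)).
  apply (Rle_trans _ ((- l) ^ k * exp ((x - 1) * l))).
  - set (A := (- l) ^ k * exp ((x - 1) * l)). assert (0 <= A) by (unfold A; nra). nra.
  - rewrite <- Rmult_assoc. apply Rmult_le_compat; lra.
Qed.

Lemma Gamma_integrand_bound_infty k x t :
  1/4 <= x <= 7/4 -> 1 <= t ->
  Rabs (Gamma_integrand k x t) <= 2 ^ S k * INR (Factorial.fact (S k)) * exp (-1/2 * t).
Proof.
  intros Hx Ht. unfold Gamma_integrand. set (l := ln t).
  assert (Hl : 0 <= l) by (unfold l; rewrite <- ln_1; apply ln_le; lra).
  assert (Hlt : l <= t)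
    by (pose proof (exp_ineq1_le l); unfold l at 2 in H; rewrite exp_ln in H; lra).
  rewrite !Rabs_mult, <- RPow_abs, (Rabs_pos_eq l), !Rabs_pos_eq by (lra || apply Rlt_le, exp_pos).
  assert (Hexp_x : exp ((x - 1) * l) <= t)
    by (rewrite <- (exp_ln t) by lra; apply exp_le; fold l; nra).
  assert (Hpow : t ^ S k <= 2 ^ S k * INR (Factorial.fact (S k)) * exp (t / 2)).
  { replace t with (2 * (t / 2)) at 1 by field.
    rewrite Rpow_mult_distr, Rmult_assoc. apply Rmult_le_compat_l; [apply pow_le; lra|].
    apply pow_le_fact_exp. lra. }
  replace (exp (-1/2 * t)) with (exp (t / 2) * exp (- t)) by (rewrite <- exp_plus; f_equal; field).
  pose proof (pow_le l k Hl). pose proof (exp_pos (- t)). pose proof (exp_pos ((x - 1) * l)).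
  apply (Rle_trans _ (t ^ S k * exp (- t))).
  - apply Rmult_le_compat_r; [lra|]. simpl. rewrite Rmult_comm.
    apply Rmult_le_compat; [lra | lra | exact Hexp_x | now apply pow_incr].
  - rewrite <- Rmult_assoc. apply Rmult_le_compat_r; lra.
Qed.

Lemma ex_RInt_gen_Gamma_integrand k x :
  1/4 <= x <= 7/4 -> ex_RInt_gen (Gamma_integrand k x) (at_right 0) (Rbar_locally p_infty).
Proof.
  intros Hx.
  set (M1 := 8 ^ k * INR (Factorial.fact k)).
  set (M2 := 2 ^ S k * INR (Factorial.fact (S k))).
  assert (Hcont : forall t, 0 < t -> continuous (Gamma_integrand k x) t)
    by (intros t Ht; apply ex_derive_continuous_R; unfold Gamma_integrand; auto_derive; lra).
  apply (ex_RInt_gen_Chasles (Fa := at_right 0) (Fc := Rbar_locally p_infty) _ 1).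
  - apply (ex_RInt_gen_at_right_0 _ M1 (1/8)); [lra | exact Hcont |].
    intros t Ht. now apply Gamma_integrand_bound_0.
  - apply (ex_RInt_gen_p_infty _ M2); [exact Hcont |].
    intros t Ht. now apply Gamma_integrand_bound_infty.
Qed.

Lemma is_RInt_gen_Gamma_deriv k x :
  1/4 <= x <= 7/4 ->
  is_RInt_gen (Gamma_integrand k x) (at_right 0) (Rbar_locally p_infty) (Gamma_deriv k x).
Proof.
  intros Hx. apply (RInt_gen_correct (V := R_CompleteNormedModule)), ex_RInt_gen_Gamma_integrand, Hx.
Qed.

Lemma taylor2_bound (f f' f'' : R -> R) x y M :
  (forall s, Rmin x y <= s <= Rmax x y ->
     is_derive f s (f' s) /\ is_derive f' s (f'' s) /\ Rabs (f'' s) <= M) ->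
  Rabs (f y - f x - (y - x) * f' x) <= (y - x) ^ 2 * M.
Proof.
  intros H.
  destruct (MVT_gen f x y f') as [c [Hc Hfc]].
  { intros s Hs. apply H. lra. }
  { intros s Hs. apply continuity_pt_filterlim, ex_derive_continuous_R. eexists. now apply H. }
  assert (Hxc : forall s, Rmin x c <= s <= Rmax x c -> Rmin x y <= s <= Rmax x y).
  { intros s Hs. revert Hc Hs. unfold Rmin, Rmax.
    destruct (Rle_dec x y), (Rle_dec x c); lra. }
  destruct (MVT_gen f' x c f'') as [d [Hd Hf'd]].
  { intros s Hs. apply H, Hxc. lra. }
  { intros s Hs. apply continuity_pt_filterlim, ex_derive_continuous_R. eexists. now apply H, Hxc. }
  replace (f y - f x - (y - x) * f' x) with ((y - x) * (c - x) * f'' d)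
    by (rewrite Hfc; replace (f' c) with (f' x + f'' d * (c - x)) by lra; ring).
  assert (Hcx : Rabs (c - x) <= Rabs (y - x)).
  { revert Hc. unfold Rmin, Rmax, Rabs.
    destruct (Rle_dec x y), (Rcase_abs (c - x)), (Rcase_abs (y - x)); lra. }
  rewrite !Rabs_mult, <- (pow2_abs (y - x)).
  pose proof (Rabs_pos (c - x)). pose proof (Rabs_pos (y - x)).
  simpl. rewrite Rmult_1_r. apply Rmult_le_compat; [nra | apply Rabs_pos | | now apply H, Hxc].
  now apply Rmult_le_compat_l.
Qed.

Lemma exp_scal_le_sum l s :
  1/4 <= s <= 7/4 -> exp ((s - 1) * l) <= exp ((1/4 - 1) * l) + exp ((7/4 - 1) * l).
Proof.
  intros Hs. pose proof (exp_pos ((1/4 - 1) * l)). pose proof (exp_pos ((7/4 - 1) * l)).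
  destruct (Rle_dec 0 l).
  - enough (exp ((s - 1) * l) <= exp ((7/4 - 1) * l)) by lra. apply exp_le. nra.
  - enough (exp ((s - 1) * l) <= exp ((1/4 - 1) * l)) by lra. apply exp_le. nra.
Qed.

Lemma exp_scal_taylor2 l x y :
  1/4 <= x <= 7/4 -> 1/4 <= y <= 7/4 ->
  Rabs (exp ((y - 1) * l) - exp ((x - 1) * l) - (y - x) * (l * exp ((x - 1) * l)))
    <= (y - x) ^ 2 * (l ^ 2 * (exp ((1/4 - 1) * l) + exp ((7/4 - 1) * l))).
Proof.
  intros Hx Hy.
  apply (taylor2_bound (fun s => exp ((s - 1) * l)) (fun s => l * exp ((s - 1) * l))
           (fun s => l ^ 2 * exp ((s - 1) * l))).
  intros s Hs. assert (Hs' : 1/4 <= s <= 7/4)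
    by (revert Hs; unfold Rmin, Rmax; destruct (Rle_dec x y); lra).
  split; [|split].
  - unfold Rminus. auto_derive; [exact I | ring].
  - unfold Rminus. auto_derive; [exact I | ring].
  - pose proof (exp_pos ((s - 1) * l)). pose proof (pow2_ge_0 l).
    rewrite Rabs_pos_eq by nra. apply Rmult_le_compat_l; [lra | now apply exp_scal_le_sum].
Qed.

(* Dominates the second-order Taylor remainder in [x] of [Gamma_integrand k x t] for
   [x] in [1/4, 7/4], since [|ln t|^(k+2) <= 1 + (ln t)^(2k+4)] and
   [t^(x-1) <= t^(-3/4) + t^(3/4)]. *)
Definition Gamma_remainder (k : nat) (t : R) : R :=
  Gamma_integrand (2 * k + 4) (1/4) t + Gamma_integrand (2 * k + 4) (7/4) t +
  Gamma_integrand 0 (1/4) t + Gamma_integrand 0 (7/4) t.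

Lemma Gamma_integrand_taylor k x y t :
  1/4 <= x <= 7/4 -> 1/4 <= y <= 7/4 ->
  Rabs (Gamma_integrand k y t - Gamma_integrand k x t - (y - x) * Gamma_integrand (S k) x t)
    <= (y - x) ^ 2 * Gamma_remainder k t.
Proof.
  intros Hx Hy. set (l := ln t).
  set (B := exp ((1/4 - 1) * l) + exp ((7/4 - 1) * l)).
  replace (Gamma_integrand k y t - Gamma_integrand k x t - (y - x) * Gamma_integrand (S k) x t)
    with (l ^ k * exp (- t) *
          (exp ((y - 1) * l) - exp ((x - 1) * l) - (y - x) * (l * exp ((x - 1) * l))))
    by (unfold Gamma_integrand; fold l; simpl; ring).
  replace (Gamma_remainder k t) with ((1 + l ^ (2 * k + 4)) * B * exp (- t))
    by (unfold Gamma_remainder, Gamma_integrand, B; fold l; simpl; ring).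
  set (w := Rabs l ^ (k + 2)).
  assert (Hw : Rabs l ^ k * l ^ 2 = w)
    by (unfold w; rewrite pow_add, <- (pow2_abs l); reflexivity).
  assert (Hw2 : l ^ (2 * k + 4) = w ^ 2)
    by (unfold w; rewrite <- pow_mult, (Nat.mul_comm _ 2), pow_mult, pow2_abs, <- pow_mult;
        f_equal; lia).
  assert (Hw_le : w <= 1 + w ^ 2) by nra.
  pose proof (exp_pos (- t)). pose proof (pow_le (Rabs l) k (Rabs_pos l)).
  assert (HB : 0 < B)
    by (unfold B; pose proof (exp_pos ((1/4 - 1) * l)); pose proof (exp_pos ((7/4 - 1) * l)); lra).
  pose proof (pow2_ge_0 (y - x)).
  rewrite Rabs_mult, Rabs_mult, <- RPow_abs, (Rabs_pos_eq (exp (- t))) by lra.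
  apply (Rle_trans _ (Rabs l ^ k * exp (- t) * ((y - x) ^ 2 * (l ^ 2 * B)))).
  - apply Rmult_le_compat_l; [apply Rmult_le_pos; lra | now apply exp_scal_taylor2].
  - rewrite Hw2. replace (Rabs l ^ k * exp (- t) * ((y - x) ^ 2 * (l ^ 2 * B)))
      with ((y - x) ^ 2 * w * B * exp (- t)) by (rewrite <- Hw; ring).
    replace ((y - x) ^ 2 * ((1 + w ^ 2) * B * exp (- t)))
      with ((y - x) ^ 2 * (1 + w ^ 2) * B * exp (- t)) by ring.
    apply Rmult_le_compat_r; [lra|]. apply Rmult_le_compat_r; [lra|].
    apply Rmult_le_compat_l; lra.
Qed.

Lemma Gamma_deriv_taylor k x y :
  1/4 <= x <= 7/4 -> 1/4 <= y <= 7/4 ->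
  Rabs (Gamma_deriv k y - Gamma_deriv k x - (y - x) * Gamma_deriv (S k) x)
    <= (y - x) ^ 2 * RInt_gen (Gamma_remainder k) (at_right 0) (Rbar_locally p_infty).
Proof.
  intros Hx Hy.
  assert (Hrem : is_RInt_gen (Gamma_remainder k) (at_right 0) (Rbar_locally p_infty)
     (Gamma_deriv (2 * k + 4) (1/4) + Gamma_deriv (2 * k + 4) (7/4) +
      Gamma_deriv 0 (1/4) + Gamma_deriv 0 (7/4))).
  { unfold Gamma_remainder.
    apply (is_RInt_gen_plus (V := R_NormedModule) (Fa := at_right 0) (Fb := Rbar_locally p_infty));
      [apply (is_RInt_gen_plus (V := R_NormedModule) (Fa := at_right 0) (Fb := Rbar_locally p_infty));
        [apply (is_RInt_gen_plus (V := R_NormedModule) (Fa := at_right 0) (Fb := Rbar_locally p_infty))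
        |] |].
    all: apply is_RInt_gen_Gamma_deriv; lra. }
  rewrite (is_RInt_gen_unique _ _ Hrem).
  assert (Hdiff : is_RInt_gen
     (fun t => minus (minus (Gamma_integrand k y t) (Gamma_integrand k x t))
                     (scal (y - x) (Gamma_integrand (S k) x t)))
     (at_right 0) (Rbar_locally p_infty)
     (minus (minus (Gamma_deriv k y) (Gamma_deriv k x)) (scal (y - x) (Gamma_deriv (S k) x)))).
  { apply (is_RInt_gen_minus (V := R_NormedModule) (Fa := at_right 0) (Fb := Rbar_locally p_infty));
      [apply (is_RInt_gen_minus (V := R_NormedModule) (Fa := at_right 0) (Fb := Rbar_locally p_infty)) |
       apply (is_RInt_gen_scal (V := R_NormedModule) (Fa := at_right 0) (Fb := Rbar_locally p_infty))].
    all: apply is_RInt_gen_Gamma_deriv; assumption. }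
  assert (Hbound : is_RInt_gen (fun t => scal ((y - x) ^ 2) (Gamma_remainder k t))
     (at_right 0) (Rbar_locally p_infty) (scal ((y - x) ^ 2) (Gamma_deriv (2 * k + 4) (1/4) +
       Gamma_deriv (2 * k + 4) (7/4) + Gamma_deriv 0 (1/4) + Gamma_deriv 0 (7/4))))
    by exact (is_RInt_gen_scal (V := R_NormedModule) _ _ _ Hrem).
  refine (RInt_gen_norm (V := R_CompleteNormedModule) (Fa := at_right 0) (Fb := Rbar_locally p_infty)
    _ _ _ _ _ _ Hdiff Hbound).
  - apply (Filter_prod _ _ _ (fun a => 0 < a <= 1) (fun b => 1 < b) at_right_0_le_1).
    + exists 1. auto.
    + simpl; intros; lra.
  - apply filter_forall. intros ab t _. exact (Gamma_integrand_taylor k x y t Hx Hy).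
Qed.

Lemma is_derive_Gamma_deriv k x :
  1/2 < x < 3/2 -> is_derive (Gamma_deriv k) x (Gamma_deriv (S k) x).
Proof.
  intros Hx. apply is_derive_Reals. intros eps Heps.
  set (C := Rabs (RInt_gen (Gamma_remainder k) (at_right 0) (Rbar_locally p_infty))).
  assert (HC : 0 <= C) by apply Rabs_pos.
  assert (Hdelta : 0 < Rmin (1/4) (eps / (C + 1)))
    by (apply Rmin_glb_lt; [lra | apply Rdiv_lt_0_compat; lra]).
  exists (mkposreal _ Hdelta). intros h Hh0 Hh. simpl in Hh.
  assert (Hh1 : Rabs h < 1/4) by (eapply Rlt_le_trans; [exact Hh | apply Rmin_l]).
  assert (Hh2 : Rabs h < eps / (C + 1)) by (eapply Rlt_le_trans; [exact Hh | apply Rmin_r]).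
  assert (Hhpos : 0 < Rabs h) by now apply Rabs_pos_lt.
  pose proof (Gamma_deriv_taylor k x (x + h)) as Htaylor.
  replace (x + h - x) with h in Htaylor by ring.
  apply Rabs_def2 in Hh1.
  replace ((Gamma_deriv k (x + h) - Gamma_deriv k x) / h - Gamma_deriv (S k) x)
    with ((Gamma_deriv k (x + h) - Gamma_deriv k x - h * Gamma_deriv (S k) x) / h)
    by (field; exact Hh0).
  unfold Rdiv. rewrite Rabs_mult, Rabs_inv.
  apply (Rle_lt_trans _ (h ^ 2 * C * / Rabs h)).
  - apply Rmult_le_compat_r; [now apply Rlt_le, Rinv_0_lt_compat|].
    eapply Rle_trans; [apply Htaylor; lra|].
    apply Rmult_le_compat_l; [apply pow2_ge_0 | apply Rle_abs].
  - rewrite <- (pow2_abs h). replace (Rabs h ^ 2 * C * / Rabs h) with (Rabs h * C) by (field; lra).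
    apply (Rle_lt_trans _ (Rabs h * (C + 1))); [nra|].
    apply (Rmult_lt_reg_r (/ (C + 1))); [apply Rinv_0_lt_compat; lra|].
    replace (Rabs h * (C + 1) * / (C + 1)) with (Rabs h) by (field; lra). exact Hh2.
Qed.

Lemma Gamma_eq_Gamma_deriv_0 x : 1/4 <= x <= 7/4 -> Gamma x = Gamma_deriv 0 x.
Proof.
  intros Hx. unfold Gamma, Gamma_deriv. symmetry.
  apply (RInt_gen_ext_eq (V := R_CompleteNormedModule) (Fa := at_right 0) (Fb := Rbar_locally p_infty)).
  - intros t. unfold Gamma_integrand, Rpower. simpl. ring.
  - now apply ex_RInt_gen_Gamma_integrand.
Qed.

Lemma Gamma_1 : Gamma 1 = 1.
Proof.
  set (f := fun t => -1 * exp (-1 * t)).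
  assert (Hf : forall t, is_derive f t (exp (- t)))
    by (intros t; unfold f; auto_derive; [exact I | replace (-1 * t) with (- t) by ring; ring]).
  assert (Hcont : forall t, continuous (Derive f) t).
  { intros t. apply (continuous_ext (fun t => exp (- t))).
    - intros s. symmetry. apply is_derive_unique, Hf.
    - apply ex_derive_continuous_R. auto_derive. exact I. }
  unfold Gamma. apply (is_RInt_gen_unique (V := R_CompleteNormedModule)).
  apply (is_RInt_gen_ext (Fa := at_right 0) (Fb := Rbar_locally p_infty) (Derive f)).
  { apply filter_forall. intros ab t _. rewrite (is_derive_unique _ _ _ (Hf t)).
    unfold Rpower. rewrite Rminus_diag, Rmult_0_l, exp_0. simpl; ring. }
  replace 1 with (0 - f 0) by (unfold f; rewrite Rmult_0_r, exp_0; ring).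
  apply (is_RInt_gen_Derive (Fa := at_right 0) (Fb := Rbar_locally p_infty)).
  - apply filter_forall. intros ab t _. eexists. apply Hf.
  - apply filter_forall. intros ab t _. apply Hcont.
  - apply (filterlim_filter_le_1 (F := locally 0)); [apply filter_le_within|].
    apply ex_derive_continuous_R. eexists. apply Hf.
  - apply (filterlim_scal_exp_m_infty (Rbar_locally p_infty)), filterlim_scal_p_infty_m_infty. lra.
Qed.

Lemma Gamma_eq_Gamma_deriv_0_near x :
  1/2 < x < 3/2 -> locally x (fun y => Gamma_deriv 0 y = Gamma y).
Proof.
  intros Hx. apply (locally_open (fun y => 1/4 < y < 7/4)).
  - apply open_and; [apply open_gt | apply open_lt].
  - intros y Hy. symmetry. apply Gamma_eq_Gamma_deriv_0. lra.
  - lra.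
Qed.

Lemma continuous_Gamma x : 1/2 < x < 3/2 -> continuous Gamma x.
Proof.
  intros Hx. apply (continuous_ext_loc _ (Gamma_deriv 0)); [now apply Gamma_eq_Gamma_deriv_0_near|].
  apply ex_derive_continuous_R. eexists. now apply is_derive_Gamma_deriv.
Qed.

Definition Gamma_dom (x : R) : Prop := 1/2 < x < 3/2 /\ 0 < Gamma x.

Lemma open_Gamma_dom : open Gamma_dom.
Proof.
  intros x [Hx Hpos]. apply filter_and.
  - exact (open_and _ _ (open_gt _) (open_lt _) x Hx).
  - apply (continuous_Gamma x Hx). exact (open_gt 0 _ Hpos).
Qed.

Lemma Gamma_dom_1 : Gamma_dom 1.
Proof. split; [lra | rewrite Gamma_1; lra]. Qed.

Lemma smooth_on_ln_Gamma : smooth_on Gamma_dom (fun x => ln (Gamma x)).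
Proof.
  apply smooth_on_ln; [exact open_Gamma_dom | | now intros x [_ Hpos]].
  intros n. apply (ex_derive_upto_is_derive_seq _ open_Gamma_dom n Gamma_deriv).
  - intros k x _ [Hx _]. now apply is_derive_Gamma_deriv.
  - intros x [Hx _]. apply Gamma_eq_Gamma_deriv_0. lra.
Qed.

(** * The central binomial coefficient *)

Definition log_central_binom (m : R) : R := ln (Gamma (2 * m + 1)) - 2 * ln (Gamma (m + 1)).

(* Here and in [log_central_binom_derivs], the [1 *] factors give the shape produced by
   [is_derive_seq_lincomb] and [is_derive_seq_comp_affine]. *)
Definition central_binom_dom (m : R) : Prop :=
  Gamma_dom (2 * m + 1) /\ Gamma_dom (1 * m + 1).

Lemma open_comp_affine (D : R -> Prop) a b : open D -> open (fun x => D (a * x + b)).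
Proof.
  apply (open_comp (fun x => a * x + b)). intros x _.
  apply (ex_derive_continuous_R (fun x => a * x + b)). auto_derive. exact I.
Qed.

Lemma open_central_binom_dom : open central_binom_dom.
Proof. apply open_and; apply open_comp_affine, open_Gamma_dom. Qed.

Lemma central_binom_dom_0 : central_binom_dom 0.
Proof. split; replace (_ * 0 + 1) with 1 by ring; exact Gamma_dom_1. Qed.

Lemma central_binom_exp m :
  central_binom_dom m -> central_binom m = exp (log_central_binom m).
Proof.
  intros [[_ H2] [_ H1]]. rewrite Rmult_1_l in H1.
  unfold central_binom, log_central_binom.
  replace (ln (Gamma (2 * m + 1)) - 2 * ln (Gamma (m + 1)))
    with (ln (Gamma (2 * m + 1)) + - (ln (Gamma (m + 1)) + ln (Gamma (m + 1)))) by ring.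
  rewrite exp_plus, exp_Ropp, exp_plus, !exp_ln by assumption. simpl. field. lra.
Qed.

Definition log_central_binom_derivs (k : nat) (m : R) : R :=
  1 * (2 ^ k * Derive_n (fun x => ln (Gamma x)) k (2 * m + 1)) +
  -2 * (1 ^ k * Derive_n (fun x => ln (Gamma x)) k (1 * m + 1)).

Lemma is_derive_seq_log_central_binom n :
  is_derive_seq central_binom_dom n log_central_binom_derivs.
Proof.
  apply is_derive_seq_lincomb;
    (apply (is_derive_seq_comp_affine _ Gamma_dom); [apply smooth_on_ln_Gamma | now intros m []]).
Qed.

Lemma log_central_binom_derivs_0 m : log_central_binom m = log_central_binom_derivs O m.
Proof. unfold log_central_binom, log_central_binom_derivs. simpl. rewrite !Rmult_1_l. lra. Qed.

Lemma smooth_on_log_central_binom : smooth_on central_binom_dom log_central_binom.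
Proof.
  intros n.
  apply (ex_derive_upto_is_derive_seq _ open_central_binom_dom n log_central_binom_derivs).
  - apply is_derive_seq_log_central_binom.
  - intros m _. apply log_central_binom_derivs_0.
Qed.

Lemma Derive_n_log_central_binom_0 j :
  Derive_n log_central_binom j 0 = (2 ^ j - 2) * Derive_n (fun x => ln (Gamma x)) j 1.
Proof.
  rewrite (is_derive_seq_Derive_n _ open_central_binom_dom j log_central_binom_derivs);
    [| apply is_derive_seq_log_central_binom | intros m _; apply log_central_binom_derivs_0 | lia |
     exact central_binom_dom_0].
  unfold log_central_binom_derivs. rewrite pow1. replace (_ * 0 + 1) with 1 by ring.
  replace (1 * 0 + 1) with 1 by ring. ring.
Qed.

Lemma bell_args_log_central_binom j :
  bell_args j = (-1) ^ j * Derive_n log_central_binom j 0.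
Proof.
  rewrite Derive_n_log_central_binom_0. unfold bell_args.
  destruct (Nat.leb_spec j 1) as [Hj | Hj].
  - destruct j as [|[|j]]; [| | lia]; simpl.
    + rewrite Gamma_1, ln_1. ring.
    + ring.
  - unfold etabar, polygamma. replace (S (j - 1)) with j by lia. ring.
Qed.

Lemma Derive_n_exp_log_central_binom p :
  Derive_n (fun m => exp (log_central_binom m)) p 0 = (-1) ^ p * Bell p bell_args.
Proof.
  rewrite (Derive_n_exp_Bell _ _ _ open_central_binom_dom central_binom_dom_0
             smooth_on_log_central_binom).
  rewrite (Bell_homogeneous p _ _ (-1) bell_args_log_central_binom).
  unfold log_central_binom. replace (2 * 0 + 1) with 1 by ring. replace (0 + 1) with 1 by ring.
  rewrite Gamma_1, ln_1, <- Rmult_assoc, <- Rpow_mult_distr. replace (-1 * -1) with 1 by ring.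
  rewrite pow1, Rmult_0_r, Rminus_0_r, exp_0. ring.
Qed.

Lemma is_derive_seq_exp_scal D n a : is_derive_seq D n (fun k x => a ^ k * exp (a * x)).
Proof. intros k x _ _. auto_derive; [exact I | simpl; ring]. Qed.

Lemma ex_derive_upto_exp_scal D n a : open D -> ex_derive_upto D n (fun x => exp (a * x)).
Proof.
  intros HD. apply (ex_derive_upto_is_derive_seq _ HD n _ _ (is_derive_seq_exp_scal D n a)).
  intros x _. simpl. ring.
Qed.

Lemma Derive_n_exp_scal a k x : Derive_n (fun x => exp (a * x)) k x = a ^ k * exp (a * x).
Proof.
  apply (is_derive_seq_Derive_n _ open_true k _ _ (is_derive_seq_exp_scal _ k a));
    [intros y _; simpl; ring | lia | exact I].
Qed.

Lemma central_binom_div_pow4 m :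
  central_binom_dom m ->
  central_binom m / Rpower 4 m = exp (log_central_binom m) * exp (- ln 4 * m).
Proof.
  intros Hm. unfold Rdiv, Rpower. rewrite central_binom_exp by exact Hm.
  rewrite <- Ropp_mult_distr_l, exp_Ropp, (Rmult_comm m). reflexivity.
Qed.

Theorem mainTheorem6 (p : nat) :
  Derive_n central_binom p 0 = (-1) ^ p * Bell p bell_args /\
  Derive_n (fun m => central_binom m / Rpower 4 m) p 0 =
    (-1) ^ p * sum_n_m (fun i => Binomial.C p i * (ln 4) ^ (p - i) * Bell i bell_args) 0 p.
Proof.
  pose proof open_central_binom_dom as Hopen.
  pose proof central_binom_dom_0 as Hdom0.
  split.
  - rewrite (Derive_n_ext_on _ Hopen _ _ p 0 central_binom_exp Hdom0).
    apply Derive_n_exp_log_central_binom.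
  - rewrite (Derive_n_ext_on _ Hopen _ _ p 0 central_binom_div_pow4 Hdom0),
      (Derive_n_mult_on _ Hopen); [| now apply smooth_on_exp, smooth_on_log_central_binom |
                                     now apply ex_derive_upto_exp_scal | exact Hdom0].
    unfold leibniz, sum_n. rewrite <- (sum_n_m_mult_l (K := R_Ring)).
    apply sum_n_m_ext_loc. intros i Hi.
    rewrite Derive_n_exp_log_central_binom, Derive_n_exp_scal, Rmult_0_r, exp_0.
    replace (- ln 4) with (-1 * ln 4) by ring. rewrite Rpow_mult_distr.
    replace ((-1) ^ p) with ((-1) ^ i * (-1) ^ (p - i)) by (rewrite <- pow_add; f_equal; lia).
    unfold mult; simpl. ring.
Qed.
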